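(* Let $P^0\in L\cap\Delta^{n-1}_+$ satisfy $\bigl(P^0+\mathbf{Q}(P^0,P^* )\bigr)\cap L=\{P^0\}$. Then there exists a strictly convex function $h$ on $(0,\infty)$ such that $P^0$ minimizes the $f$-divergence $H_h(P\|P^* )=\sum_i p^*_i\,h(p_i/p^*_i)$ over $L\cap\Delta^{n-1}_+$. Conversely, if $P^0\in L\cap\Delta^{n-1}_+$ is a minimizer over $L\cap\Delta^{n-1}_+$ of $H_h(\cdot\|P^* )$ for some strictly convex differentiable $h$ on $(0,\infty)$, then $\bigl(P^0+\mathbf{Q}(P^0,P^* )\bigr)\cap L=\{P^0\}$.
   Context: Fix $n\ge 2$ and a positive equilibrium distribution $P^*=(p^*_i)$, $p^*_i>0$, $\sum_i p^*_i=1$. Let $\Delta^{n-1}_+=\{P\in\mathbb{R}^n: p_i>0,\ \sum_i p_i=1\}$. For $i\neq j$ let $\gamma^{ji}\in\mathbb{R}^n$ be the vector with $\gamma^{ji}_j=-1$, $\gamma^{ji}_i=1$, other coordinates $0$; ${\rm cone}$ denotes the set of non-negative linear combinations; ${\rm sign}$ is the three-valued sign function; $$\mathbf{Q}(P,P^* )={\rm cone}\Bigl\{\gamma^{ji}\,{\rm sign}\Bigl(\tfrac{p_j}{p^*_j}-\tfrac{p_i}{p^*_i}\Bigr)\ :\ 1\le j<i\le n\Bigr\}.$$ The condition manifold is $L=\{P\in\mathbb{R}^n:\ \sum_j m_{rj}p_j=M_r,\ r=0,\dots,k\}$ for a real $(k+1)\times n$ matrix $(m_{rj})$ with $m_{0j}=1$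 for all $j$, $M_0=1$; assume $L\cap\Delta^{n-1}_+\neq\emptyset$. *)

From Stdlib Require Import Reals Lra Lia.
Open Scope R_scope.

(* Vectors of R^n are represented as functions nat -> R, only indices < n matter. *)

Fixpoint sumR (n : nat) (f : nat -> R) : R :=
  match n with
  | O => 0
  | S k => sumR k f + f k
  end.

Definition sgn (x : R) : R :=
  if Rlt_dec 0 x then 1 else if Rlt_dec x 0 then -1 else 0.

Definition in_simplex (n : nat) (p : nat -> R) : Prop :=
  (forall i, (i < n)%nat -> 0 < p i) /\ sumR n p = 1.

Definition in_L (n k : nat) (m : nat -> nat -> R) (M : nat -> R) (p : nat -> R) : Prop :=
  forall r, (r <= k)%nat -> sumR n (fun j => m r j * p j) = M r.

Definition gamma (j i : nat) (l : nat) : R :=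
  (if Nat.eq_dec l i then 1 else 0) - (if Nat.eq_dec l j then 1 else 0).

(* v belongs to Q(P,Pstar) = cone{ gamma^{ji} sign(p_j/p*_j - p_i/p*_i) : 1<=j<i<=n }
   (0-based indices: j < i < n), i.e. v is a nonnegative combination of these generators *)
Definition in_Q (n : nat) (p ps : nat -> R) (v : nat -> R) : Prop :=
  exists c : nat -> nat -> R,
    (forall j i, (j < i)%nat -> (i < n)%nat -> 0 <= c j i) /\
    forall l, (l < n)%nat ->
      v l = sumR n (fun i => sumR i (fun j =>
              c j i * sgn (p j / ps j - p i / ps i) * gamma j i l)).

(* (P0 + Q(P0,Pstar)) ∩ L = {P0}; P0 itself lies in it (v = 0), so only the
   inclusion in {P0} is stated *)
Definition Q_cond (n k : nat) (m : nat -> nat -> R) (M : nat -> R)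
    (ps p0 : nat -> R) : Prop :=
  forall x : nat -> R,
    (exists v, in_Q n p0 ps v /\ forall l, (l < n)%nat -> x l = p0 l + v l) ->
    in_L n k m M x ->
    forall l, (l < n)%nat -> x l = p0 l.

Definition strictly_convex_pos (h : R -> R) : Prop :=
  forall x y t, 0 < x -> 0 < y -> x <> y -> 0 < t < 1 ->
    h (t * x + (1 - t) * y) < t * h x + (1 - t) * h y.

Definition differentiable_pos (h : R -> R) : Prop :=
  forall x, 0 < x -> exists l, derivable_pt_lim h x l.

Definition Hdiv (n : nat) (h : R -> R) (p ps : nat -> R) : R :=
  sumR n (fun i => ps i * h (p i / ps i)).

Definition is_minimizer (n k : nat) (m : nat -> nat -> R) (M : nat -> R)
    (h : R -> R) (ps p0 : nat -> R) : Prop :=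
  forall p, in_L n k m M p -> in_simplex n p -> Hdiv n h p0 ps <= Hdiv n h p ps.

(* Write r_i = p0_i / p*_i for the likelihood ratios at P0.  Every generator
   sgn(r_j - r_i) gamma^{ji} of the cone Q(P0,P* ) moves mass from the larger of
   the two ratios to the smaller one.  Hence, for any g strictly increasing along
   the ratios, the linear functional v |-> sum_l g_l v_l is negative on Q \ {0}
   (lemma [cone_descent]).

   Backward direction.  If h is strictly convex and differentiable, h' is strictly
   increasing, so sum_l h'(r_l) v_l, the derivative of H_h(.||P* ) at P0 in the
   direction v, is negative for every nonzero v in Q.  If P0 + v were in L, moving
   slightly from P0 towards P0 + v would stay in L ∩ Δ_+ and decrease H_h.

   Forward direction.  Gordan's alternative (proved by Fourier-Motzkin
   elimination) applied to the images under the constraint matrix of the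
   generators of Q yields multipliers lam such that g_l = sum_r lam_r m_{rl} is
   strictly increasing along the ratios; g is orthogonal to L - P0.  A strictly
   convex h with subgradient g_l at r_l (a maximum of supporting lines plus a small
   quadratic) then makes P0 a minimizer, by the subgradient inequality. *)

From Stdlib Require Import Reals Lra Lia List Psatz.
Open Scope R_scope.

Lemma sumR_ext n f g : (forall i, (i < n)%nat -> f i = g i) -> sumR n f = sumR n g.
Proof.
  induction n; simpl; intros H; auto.
  rewrite IHn by (intros; apply H; lia). rewrite H by lia. reflexivity.
Qed.

Lemma sumR_plus n f g : sumR n (fun i => f i + g i) = sumR n f + sumR n g.
Proof. induction n; simpl; [lra|]. rewrite IHn; lra. Qed.

Lemma sumR_minus n f g : sumR n (fun i => f i - g i) = sumR n f - sumR n g.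
Proof. induction n; simpl; [lra|]. rewrite IHn; lra. Qed.

Lemma sumR_scal n c f : sumR n (fun i => c * f i) = c * sumR n f.
Proof. induction n; simpl; [lra|]. rewrite IHn; lra. Qed.

Lemma sumR_opp n f : sumR n (fun i => - f i) = - sumR n f.
Proof. induction n; simpl; [lra|]. rewrite IHn; lra. Qed.

Lemma sumR_zero n f : (forall i, (i < n)%nat -> f i = 0) -> sumR n f = 0.
Proof.
  induction n; simpl; intros H; [reflexivity|].
  rewrite IHn by (intros; apply H; lia). rewrite H by lia. lra.
Qed.

Lemma sumR_le n f g : (forall i, (i < n)%nat -> f i <= g i) -> sumR n f <= sumR n g.
Proof.
  induction n; simpl; intros H; [lra|].
  assert (f n <= g n) by (apply H; lia).
  assert (sumR n f <= sumR n g) by (apply IHn; intros; apply H; lia). lra.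
Qed.

Lemma sumR_nonneg n f : (forall i, (i < n)%nat -> 0 <= f i) -> 0 <= sumR n f.
Proof. intros H. rewrite <- (sumR_zero n (fun _ => 0)) by auto. apply sumR_le; auto. Qed.

Lemma sumR_nonpos n f : (forall i, (i < n)%nat -> f i <= 0) -> sumR n f <= 0.
Proof. intros H. rewrite <- (sumR_zero n (fun _ => 0)) by auto. apply sumR_le; auto. Qed.

Lemma sumR_nonpos_zero n f : (forall i, (i < n)%nat -> f i <= 0) -> 0 <= sumR n f ->
  forall i, (i < n)%nat -> f i = 0.
Proof.
  induction n as [|n IH]; simpl; intros Hf Hs i Hi; [lia|].
  assert (Hn : f n <= 0) by (apply Hf; lia).
  assert (Hrest : sumR n f <= 0) by (apply sumR_nonpos; intros; apply Hf; lia).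
  destruct (Nat.eq_dec i n) as [->|Hin]; [lra|].
  apply IH; [intros; apply Hf; lia|lra|lia].
Qed.

Lemma sumR_swap n p f :
  sumR n (fun i => sumR p (fun j => f i j)) = sumR p (fun j => sumR n (fun i => f i j)).
Proof.
  induction n; simpl.
  - symmetry; apply sumR_zero; auto.
  - rewrite IHn, <- sumR_plus. reflexivity.
Qed.

Lemma sumR_pick n f k : (k < n)%nat -> (forall l, (l < n)%nat -> l <> k -> f l = 0) ->
  sumR n f = f k.
Proof.
  induction n; intros Hk H; [lia|]. simpl.
  destruct (Nat.eq_dec k n).
  - subst. rewrite sumR_zero; [lra|]. intros; apply H; lia.
  - rewrite IHn by (lia || (intros; apply H; lia)). rewrite (H n) by lia. lra.
Qed.

Lemma sumR_gamma n f j i : (j < n)%nat -> (i < n)%nat ->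
  sumR n (fun l => f l * gamma j i l) = f i - f j.
Proof.
  intros Hj Hi. unfold gamma.
  rewrite (sumR_ext n _ (fun l => f l * (if Nat.eq_dec l i then 1 else 0)
                                  - f l * (if Nat.eq_dec l j then 1 else 0))) by (intros; ring).
  rewrite sumR_minus, (sumR_pick n _ i), (sumR_pick n _ j); auto.
  - destruct (Nat.eq_dec i i), (Nat.eq_dec j j); try congruence; ring.
  - intros l _ H; destruct (Nat.eq_dec l j); [congruence|ring].
  - intros l _ H; destruct (Nat.eq_dec l i); [congruence|ring].
Qed.

Lemma small_common n (P : nat -> R -> Prop) :
  (forall i, (i < n)%nat -> exists d, 0 < d /\ forall t, 0 < t -> t <= d -> P i t) ->
  exists d, 0 < d /\ forall i, (i < n)%nat -> forall t, 0 < t -> t <= d -> P i t.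
Proof.
  induction n; intros H.
  - exists 1; split; [lra|]; intros; lia.
  - destruct IHn as [d1 [Hd1 H1]]; [intros; apply H; lia|].
    destruct (H n) as [d2 [Hd2 H2]]; [lia|].
    exists (Rmin d1 d2); split; [apply Rmin_glb_lt; auto|].
    intros i Hi t Ht Htd. destruct (Nat.eq_dec i n).
    + subst; apply H2; auto. eapply Rle_trans; [exact Htd|apply Rmin_r].
    + apply H1; [lia|auto|]. eapply Rle_trans; [exact Htd|apply Rmin_l].
Qed.

Lemma fin_choice n (P : nat -> R -> Prop) :
  (forall i, (i < n)%nat -> exists y, P i y) -> exists f, forall i, (i < n)%nat -> P i (f i).
Proof.
  induction n; intros H.
  - exists (fun _ => 0); intros; lia.
  - destruct IHn as [f Hf]; [intros; apply H; lia|].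
    destruct (H n) as [y Hy]; [lia|].
    exists (fun i => if Nat.eq_dec i n then y else f i). intros i Hi.
    destruct (Nat.eq_dec i n); [subst; auto|apply Hf; lia].
Qed.

Lemma finite_upper_bound n (f : nat -> R) : exists B, forall i, (i < n)%nat -> f i <= B.
Proof.
  induction n.
  - exists 0; intros; lia.
  - destruct IHn as [B HB]. exists (Rmax B (f n)). intros i Hi.
    destruct (Nat.eq_dec i n); [subst; apply Rmax_r|].
    eapply Rle_trans; [apply HB; lia|apply Rmax_l].
Qed.

Lemma sgn_pos x : 0 < x -> sgn x = 1.
Proof. unfold sgn; destruct (Rlt_dec 0 x); [auto|lra]. Qed.

Lemma sgn_neg x : x < 0 -> sgn x = -1.
Proof. unfold sgn; destruct (Rlt_dec 0 x); [lra|]. destruct (Rlt_dec x 0); [auto|lra]. Qed.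

Lemma sgn_zero : sgn 0 = 0.
Proof. unfold sgn; destruct (Rlt_dec 0 0); [lra|]. destruct (Rlt_dec 0 0); [lra|auto]. Qed.

Definition ratio (p ps : nat -> R) (i : nat) : R := p i / ps i.

Definition increasing_along (n : nat) (r g : nat -> R) : Prop :=
  forall i j, (i < n)%nat -> (j < n)%nat -> r i < r j -> g i < g j.

Lemma Q_add n p ps v1 v2 : in_Q n p ps v1 -> in_Q n p ps v2 -> in_Q n p ps (fun l => v1 l + v2 l).
Proof.
  intros [c1 [Hc1 H1]] [c2 [Hc2 H2]]. exists (fun j i => c1 j i + c2 j i). split.
  - intros j i Hj Hi. specialize (Hc1 j i Hj Hi); specialize (Hc2 j i Hj Hi); lra.
  - intros l Hl. rewrite H1, H2 by auto. rewrite <- sumR_plus. apply sumR_ext; intros.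
    rewrite <- sumR_plus. apply sumR_ext; intros. ring.
Qed.

Lemma Q_scal n p ps t v : 0 <= t -> in_Q n p ps v -> in_Q n p ps (fun l => t * v l).
Proof.
  intros Ht [c [Hc H]]. exists (fun j i => t * c j i). split.
  - intros j i Hj Hi. specialize (Hc j i Hj Hi); nra.
  - intros l Hl. rewrite H by auto. rewrite <- sumR_scal. apply sumR_ext; intros.
    rewrite <- sumR_scal. apply sumR_ext; intros. ring.
Qed.

Lemma Q_generator n p ps j i : (j < i)%nat -> (i < n)%nat ->
  in_Q n p ps (fun l => sgn (ratio p ps j - ratio p ps i) * gamma j i l).
Proof.
  intros Hji Hin.
  exists (fun a b => if Nat.eq_dec a j then if Nat.eq_dec b i then 1 else 0 else 0). split.
  - intros a b _ _. destruct (Nat.eq_dec a j); [destruct (Nat.eq_dec b i)|]; lra.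
  - intros l Hl. rewrite (sumR_pick n _ i); auto.
    + rewrite (sumR_pick i _ j); auto.
      * destruct (Nat.eq_dec j j), (Nat.eq_dec i i); try congruence. unfold ratio; ring.
      * intros a _ Ha. destruct (Nat.eq_dec a j); [congruence|ring].
    + intros b _ Hb. apply sumR_zero. intros a _.
      destruct (Nat.eq_dec a j); [destruct (Nat.eq_dec b i); [congruence|]|]; ring.
Qed.

Lemma cone_pairing n p ps c v f :
  (forall l, (l < n)%nat -> v l = sumR n (fun i => sumR i (fun j =>
       c j i * sgn (p j / ps j - p i / ps i) * gamma j i l))) ->
  sumR n (fun l => f l * v l) =
  sumR n (fun i => sumR i (fun j => c j i * sgn (p j / ps j - p i / ps i) * (f i - f j))).
Proof.
  intros Hv.
  rewrite (sumR_ext n _ (fun l => sumR n (fun i => sumR i (fun j =>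
     c j i * sgn (p j / ps j - p i / ps i) * (f l * gamma j i l))))).
  2:{ intros l Hl. rewrite Hv by auto. rewrite <- sumR_scal. apply sumR_ext; intros.
      rewrite <- sumR_scal. apply sumR_ext; intros. ring. }
  rewrite sumR_swap. apply sumR_ext. intros i Hi. rewrite sumR_swap. apply sumR_ext.
  intros j Hj. rewrite sumR_scal, sumR_gamma by lia. ring.
Qed.

(* A functional increasing along the ratios is negative on every nonzero element of Q:
   each generator moves mass from the larger ratio to the smaller one. *)
Lemma cone_descent n p ps f v :
  increasing_along n (ratio p ps) f -> in_Q n p ps v ->
  (exists l, (l < n)%nat /\ v l <> 0) -> sumR n (fun l => f l * v l) < 0.
Proof.
  intros Hf [c [Hc Hv]] [l [Hl Hvl]]. unfold increasing_along, ratio in Hf.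
  rewrite (cone_pairing n p ps c v f Hv).
  set (term := fun i j => c j i * sgn (p j / ps j - p i / ps i) * (f i - f j)).
  assert (Hterm : forall i j, (i < n)%nat -> (j < i)%nat -> term i j <= 0).
  { intros i j Hi Hj. unfold term. assert (Hc0 := Hc j i Hj Hi).
    destruct (total_order_T (p j / ps j) (p i / ps i)) as [[H|H]|H].
    - rewrite sgn_neg by lra. assert (f j < f i) by (apply Hf; auto; lia). nra.
    - rewrite H, Rminus_diag, sgn_zero. lra.
    - rewrite sgn_pos by lra. assert (f i < f j) by (apply Hf; auto; lia). nra. }
  assert (Hinner : forall i, (i < n)%nat -> sumR i (term i) <= 0).
  { intros i Hi. apply sumR_nonpos. intros j Hj; apply Hterm; auto. }
  destruct (Rlt_or_le (sumR n (fun i => sumR i (term i))) 0) as [Hlt|Hge]; [exact Hlt|exfalso].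
  apply Hvl. rewrite Hv by auto. apply sumR_zero. intros i Hi. apply sumR_zero. intros j Hj.
  assert (Hzero : term i j = 0).
  { assert (Hrow : sumR i (term i) = 0)
      by (apply (sumR_nonpos_zero n (fun i => sumR i (term i))); auto).
    apply (sumR_nonpos_zero i (term i)); [intros; apply Hterm; auto|lra|auto]. }
  unfold term in Hzero.
  destruct (Req_dec (p j / ps j) (p i / ps i)) as [E|E].
  - rewrite E, Rminus_diag, sgn_zero. ring.
  - assert (f i - f j <> 0).
    { destruct (Rlt_dec (p j / ps j) (p i / ps i)).
      - assert (f j < f i) by (apply Hf; auto; lia). lra.
      - assert (f i < f j) by (apply Hf; auto; try lia; lra). lra. }
    apply Rmult_integral in Hzero. destruct Hzero as [Hzero|Hzero]; [|contradiction].
    rewrite Hzero. ring.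
Qed.

Lemma first_order h x l : derivable_pt_lim h x l ->
  forall eps, 0 < eps -> exists del, 0 < del /\
    forall e, Rabs e < del -> Rabs (h (x + e) - h x - l * e) <= eps * Rabs e.
Proof.
  intros Hd eps Heps. destruct (Hd eps Heps) as [del Hdel].
  exists del. split; [apply cond_pos|]. intros e He.
  destruct (Req_dec e 0) as [->|Hne].
  - rewrite Rplus_0_r, Rabs_R0. replace (h x - h x - l * 0) with 0 by ring.
    rewrite Rabs_R0; lra.
  - replace (h (x + e) - h x - l * e) with (e * ((h (x + e) - h x) / e - l)) by (field; auto).
    rewrite Rabs_mult, (Rmult_comm eps). apply Rmult_le_compat_l; [apply Rabs_pos|].
    left. apply Hdel; auto.
Qed.

Lemma tangent_below h a b l : strictly_convex_pos h -> 0 < a -> 0 < b ->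
  derivable_pt_lim h a l -> h a + l * (b - a) <= h b.
Proof.
  intros Hc Ha Hb Hd. destruct (Req_dec a b) as [<-|Hab]; [lra|].
  destruct (Rle_or_lt (h a + l * (b - a)) (h b)) as [|Hgap]; [auto|exfalso].
  set (gap := h a + l * (b - a) - h b).
  assert (Hba : 0 < Rabs (b - a)) by (apply Rabs_pos_lt; lra).
  destruct (first_order h a l Hd (gap / Rabs (b - a))) as [del [Hdel Hfo]].
  { apply Rdiv_lt_0_compat; unfold gap; lra. }
  (* compare h at a + t (b - a) with the chord and with the tangent *)
  set (t := Rmin (1 / 2) (del / (2 * Rabs (b - a)))).
  assert (Ht0 : 0 < t) by (apply Rmin_glb_lt; [lra|apply Rdiv_lt_0_compat; lra]).
  assert (Ht1 : t <= 1 / 2) by apply Rmin_l.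
  assert (Htd : t * (2 * Rabs (b - a)) <= del).
  { assert (t <= del / (2 * Rabs (b - a))) by apply Rmin_r.
    apply (Rmult_le_compat_r (2 * Rabs (b - a))) in H; [|lra].
    replace (del / (2 * Rabs (b - a)) * (2 * Rabs (b - a))) with del in H by (field; lra).
    exact H. }
  assert (Het : Rabs (t * (b - a)) = t * Rabs (b - a)) by (rewrite Rabs_mult, Rabs_right; lra).
  assert (Hsmall : Rabs (t * (b - a)) < del) by (rewrite Het; nra).
  specialize (Hfo _ Hsmall). rewrite Het in Hfo.
  replace (gap / Rabs (b - a) * (t * Rabs (b - a))) with (t * gap) in Hfo by (field; lra).
  assert (Hlow := Rle_abs (- (h (a + t * (b - a)) - h a - l * (t * (b - a))))).
  rewrite Rabs_Ropp in Hlow.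
  assert (Hchord := Hc b a t Hb Ha (not_eq_sym Hab) ltac:(lra)).
  replace (t * b + (1 - t) * a) with (a + t * (b - a)) in Hchord by ring.
  unfold gap in *. nra.
Qed.

Lemma tangent_strictly_below h a b l : strictly_convex_pos h -> 0 < a -> 0 < b -> a <> b ->
  derivable_pt_lim h a l -> h a + l * (b - a) < h b.
Proof.
  intros Hc Ha Hb Hab Hd. set (c := (a + b) / 2).
  assert (Hac := tangent_below h a c l Hc Ha ltac:(unfold c; lra) Hd).
  assert (Hmid := Hc a b (1 / 2) Ha Hb Hab ltac:(lra)).
  replace (1 / 2 * a + (1 - 1 / 2) * b) with c in Hmid by (unfold c; field).
  unfold c in *. lra.
Qed.

Lemma deriv_increasing h a b la lb : strictly_convex_pos h -> 0 < a -> a < b ->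
  derivable_pt_lim h a la -> derivable_pt_lim h b lb -> la < lb.
Proof.
  intros Hc Ha Hab Hda Hdb.
  assert (H1 := tangent_strictly_below h a b la Hc Ha ltac:(lra) ltac:(lra) Hda).
  assert (H2 := tangent_strictly_below h b a lb Hc ltac:(lra) Ha ltac:(lra) Hdb).
  apply (Rmult_lt_reg_r (b - a)); lra.
Qed.

Lemma coordinate_first_order h c x u l eps : 0 < c -> 0 < x -> 0 < eps ->
  derivable_pt_lim h (x / c) l ->
  exists del, 0 < del /\ forall t, 0 < t -> t <= del ->
    0 < x + t * u /\ c * (h ((x + t * u) / c) - h (x / c)) <= t * (l * u) + eps * t * Rabs u.
Proof.
  intros Hc Hx Heps Hd. destruct (first_order h (x / c) l Hd eps Heps) as [del [Hdel Hfo]].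
  assert (Hu := Rabs_pos u).
  exists (Rmin (del * c / (Rabs u + 1)) (x / (Rabs u + 1))). split.
  { apply Rmin_glb_lt; apply Rdiv_lt_0_compat; nra. }
  intros t Ht Htd.
  assert (Ht1 : t * (Rabs u + 1) <= del * c).
  { assert (t <= del * c / (Rabs u + 1)) by (eapply Rle_trans; [exact Htd|apply Rmin_l]).
    apply (Rmult_le_compat_r (Rabs u + 1)) in H; [|lra].
    replace (del * c / (Rabs u + 1) * (Rabs u + 1)) with (del * c) in H by (field; lra). exact H. }
  assert (Ht2 : t * (Rabs u + 1) <= x).
  { assert (t <= x / (Rabs u + 1)) by (eapply Rle_trans; [exact Htd|apply Rmin_r]).
    apply (Rmult_le_compat_r (Rabs u + 1)) in H; [|lra].
    replace (x / (Rabs u + 1) * (Rabs u + 1)) with x in H by (field; lra). exact H. }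
  split.
  - assert (- u <= Rabs u) by (rewrite <- Rabs_Ropp; apply Rle_abs). nra.
  - set (e := t * u / c).
    assert (Hae : Rabs e = t * Rabs u / c).
    { unfold e, Rdiv. rewrite !Rabs_mult, Rabs_inv, (Rabs_right t), (Rabs_right c) by lra.
      reflexivity. }
    assert (Hsmall : Rabs e < del).
    { rewrite Hae. apply (Rmult_lt_reg_r c); [lra|].
      replace (t * Rabs u / c * c) with (t * Rabs u) by (field; lra). nra. }
    specialize (Hfo e Hsmall).
    apply (Rle_trans _ _ _ (Rle_abs _)) in Hfo.
    replace ((x + t * u) / c) with (x / c + e) by (unfold e; field; lra).
    apply (Rmult_le_compat_l c) in Hfo; [|lra].
    rewrite Hae in Hfo.
    replace (c * (eps * (t * Rabs u / c))) with (eps * t * Rabs u) in Hfo by (field; lra).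
    replace (t * (l * u)) with (c * (l * e)) by (unfold e; field; lra).
    lra.
Qed.

Lemma descent_step n h ps p0 d v :
  (forall i, (i < n)%nat -> 0 < ps i) -> (forall i, (i < n)%nat -> 0 < p0 i) ->
  (forall i, (i < n)%nat -> derivable_pt_lim h (p0 i / ps i) (d i)) ->
  sumR n (fun i => d i * v i) < 0 ->
  exists t, (forall i, (i < n)%nat -> 0 < p0 i + t * v i) /\
    Hdiv n h (fun i => p0 i + t * v i) ps < Hdiv n h p0 ps.
Proof.
  intros Hps Hp0 Hd HD.
  set (D := sumR n (fun i => d i * v i)) in HD.
  set (S := sumR n (fun i => Rabs (v i))).
  assert (HS : 0 <= S) by (apply sumR_nonneg; intros; apply Rabs_pos).
  set (eps := - D / (2 * (S + 1))).
  assert (Heps : 0 < eps) by (unfold eps; apply Rdiv_lt_0_compat; lra).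
  destruct (small_common n (fun i t => 0 < p0 i + t * v i /\
       ps i * (h ((p0 i + t * v i) / ps i) - h (p0 i / ps i))
         <= t * (d i * v i) + eps * t * Rabs (v i))) as [t [Ht Hsmall]].
  { intros i Hi. apply coordinate_first_order; auto. }
  exists t. split; [intros i Hi; apply (Hsmall i Hi t); lra|].
  assert (Hle : Hdiv n h (fun i => p0 i + t * v i) ps - Hdiv n h p0 ps <= t * D + eps * t * S).
  { unfold Hdiv, D, S. rewrite <- sumR_minus, <- !sumR_scal, <- sumR_plus. apply sumR_le.
    intros i Hi. destruct (Hsmall i Hi t Ht (Rle_refl _)) as [_ H]. lra. }
  assert (Hes : eps * (S + 1) = - D / 2) by (unfold eps; field; lra).
  assert (eps * S < - D / 2) by nra.
  assert (t * D + eps * t * S < 0) by nra.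
  lra.
Qed.

Lemma in_L_line n k m M p q t : in_L n k m M p -> in_L n k m M q ->
  in_L n k m M (fun l => p l + t * (q l - p l)).
Proof.
  intros Hp Hq r Hr.
  rewrite (sumR_ext n _ (fun l => m r l * p l + t * (m r l * q l - m r l * p l))) by (intros; ring).
  rewrite sumR_plus, sumR_scal, sumR_minus, Hp, Hq by auto. ring.
Qed.

Lemma in_L_mass n k m M p : (forall j, (j < n)%nat -> m 0%nat j = 1) -> in_L n k m M p ->
  sumR n p = M 0%nat.
Proof.
  intros Hm0 Hp. rewrite <- (Hp 0%nat) by lia.
  apply sumR_ext. intros j Hj. rewrite Hm0 by auto. ring.
Qed.

(* Backward direction: a differentiable strictly convex h minimized at P0 forces
   the cone condition, since a nonzero v would be a descent direction inside L. *)
Lemma backward n ps k m M p0 : (forall j, (j < n)%nat -> m 0%nat j = 1) ->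
  in_simplex n ps -> in_L n k m M p0 -> in_simplex n p0 ->
  (exists h, strictly_convex_pos h /\ differentiable_pos h /\ is_minimizer n k m M h ps p0) ->
  Q_cond n k m M ps p0.
Proof.
  intros Hm0 [Hps _] HL [Hp0 Hp01] [h [Hsc [Hdf Hmin]]] x [v [Hv Hxv]] HxL l Hl.
  rewrite Hxv by auto.
  destruct (Req_dec (v l) 0) as [->|Hne]; [ring|exfalso].
  destruct (fin_choice n (fun i y => derivable_pt_lim h (p0 i / ps i) y)) as [d Hd].
  { intros i Hi. apply Hdf, Rdiv_lt_0_compat; auto. }
  (* h' is increasing along the ratios, so v is a descent direction *)
  assert (HD : sumR n (fun i => d i * v i) < 0).
  { apply (cone_descent n p0 ps); eauto.
    intros i j Hi Hj Hr. unfold ratio in Hr.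
    apply (deriv_increasing h (p0 i / ps i) (p0 j / ps j)); auto.
    apply Rdiv_lt_0_compat; auto. }
  set (w := fun i => x i - p0 i).
  assert (HDw : sumR n (fun i => d i * w i) < 0).
  { rewrite (sumR_ext n _ (fun i => d i * v i)); auto. intros i Hi. unfold w. rewrite Hxv; auto; ring. }
  destruct (descent_step n h ps p0 d w Hps Hp0 Hd HDw) as [t [Hpos Hlt]].
  apply (Rlt_not_le _ _ Hlt), Hmin.
  - apply in_L_line; auto.
  - split; [exact Hpos|].
    rewrite (in_L_mass n k m M), <- Hp01, (in_L_mass n k m M p0); auto. apply in_L_line; auto.
Qed.

(* Vectors of R^d are functions nat -> R; [pos_comb zs] is the set of positive
   combinations of the vectors of the list zs (the cone they generate, without 0). *)
Definition vadd (u w : nat -> R) : nat -> R := fun l => u l + w l.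
Definition vscal (t : R) (u : nat -> R) : nat -> R := fun l => t * u l.
Definition dot (d : nat) (a u : nat -> R) : R := sumR d (fun l => a l * u l).

Inductive pos_comb (zs : list (nat -> R)) : (nat -> R) -> Prop :=
| pos_comb_in : forall z, In z zs -> pos_comb zs z
| pos_comb_add : forall u w, pos_comb zs u -> pos_comb zs w -> pos_comb zs (vadd u w)
| pos_comb_scal : forall t u, 0 < t -> pos_comb zs u -> pos_comb zs (vscal t u).

Lemma pos_comb_mono zs1 zs2 w :
  (forall z, In z zs1 -> pos_comb zs2 z) -> pos_comb zs1 w -> pos_comb zs2 w.
Proof. intros H Hw; induction Hw; [auto|apply pos_comb_add|apply pos_comb_scal]; auto. Qed.

Lemma pos_comb_coord zs d w : (forall z, In z zs -> z d = 0) -> pos_comb zs w -> w d = 0.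
Proof.
  intros H Hw; induction Hw; unfold vadd, vscal; [auto|rewrite IHHw1, IHHw2; lra|rewrite IHHw; lra].
Qed.

Lemma list_max a0 A : exists x, In x (a0 :: A) /\ forall a, In a (a0 :: A) -> a <= x.
Proof.
  revert a0; induction A as [|a1 A IH]; intros a0.
  - exists a0; split; [left; auto|]. intros a [H|[]]; subst; lra.
  - destruct (IH a1) as [x [Hx Hm]]. exists (Rmax a0 x). split.
    + unfold Rmax; destruct (Rle_dec a0 x); [right; auto|left; auto].
    + intros a [H|H]; [subst; apply Rmax_l|]. eapply Rle_trans; [apply Hm; auto|apply Rmax_r].
Qed.

Lemma list_min a0 A : exists x, In x (a0 :: A) /\ forall a, In a (a0 :: A) -> x <= a.
Proof.
  destruct (list_max (- a0) (map Ropp A)) as [x [Hx Hm]].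
  exists (- x). split.
  - destruct Hx as [H|H]; [left; lra|]. right. apply in_map_iff in H.
    destruct H as [y [<- Hy]]. replace (- - y) with y by ring; auto.
  - intros a Ha. assert (In (- a) (- a0 :: map Ropp A)).
    { destruct Ha as [H|H]; [left; subst; auto|right; apply in_map; auto]. }
    specialize (Hm _ H). lra.
Qed.

Lemma separate_lists (A B : list R) : (forall a b, In a A -> In b B -> a < b) ->
  exists t, (forall a, In a A -> a < t) /\ (forall b, In b B -> t < b).
Proof.
  intros H. destruct A as [|a0 A]; destruct B as [|b0 B].
  - exists 0; split; intros ? [].
  - destruct (list_min b0 B) as [y [Hy Hm]]. exists (y - 1). split; [intros ? []|].
    intros b Hb; specialize (Hm b Hb); lra.
  - destruct (list_max a0 A) as [x [Hx Hm]]. exists (x + 1). split; [|intros ? []].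
    intros a Ha; specialize (Hm a Ha); lra.
  - destruct (list_max a0 A) as [x [Hx Hmx]]. destruct (list_min b0 B) as [y [Hy Hmy]].
    assert (x < y) by (apply H; auto).
    exists ((x + y) / 2). split.
    + intros a Ha; specialize (Hmx a Ha); lra.
    + intros b Hb; specialize (Hmy b Hb); lra.
Qed.

Definition posb (x : R) : bool := if Rlt_dec 0 x then true else false.

Lemma posb_spec x : posb x = true <-> 0 < x.
Proof. unfold posb; destruct (Rlt_dec 0 x); split; auto; discriminate. Qed.

(* Lifting step of the elimination: if every positive/negative pair of values of c
   yields a positive combination of D, some t makes D + t c positive wherever c <> 0. *)
Lemma elimination_threshold (zs : list (nat -> R)) (D c : (nat -> R) -> R) :
  (forall p q, In p zs -> In q zs -> 0 < c p -> c q < 0 -> 0 < - c q * D p + c p * D q) ->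
  exists t, forall z, In z zs -> c z <> 0 -> 0 < D z + t * c z.
Proof.
  intros Hpq.
  set (Pl := filter (fun z => posb (c z)) zs).
  set (Nl := filter (fun z => posb (- c z)) zs).
  assert (HP : forall z, In z Pl <-> In z zs /\ 0 < c z).
  { intros z; unfold Pl; rewrite filter_In, posb_spec; tauto. }
  assert (HN : forall z, In z Nl <-> In z zs /\ c z < 0).
  { intros z; unfold Nl; rewrite filter_In, posb_spec; split; intros [? ?]; split; auto; lra. }
  destruct (separate_lists (map (fun p => - D p / c p) Pl) (map (fun q => D q / - c q) Nl))
    as [t [H1 H2]].
  - intros a b Ha Hb. apply in_map_iff in Ha, Hb.
    destruct Ha as [p [<- Hp]], Hb as [q [<- Hq]]. apply HP in Hp; apply HN in Hq.
    specialize (Hpq p q (proj1 Hp) (proj1 Hq) (proj2 Hp) (proj2 Hq)).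
    apply (Rmult_lt_reg_r (c p * - c q)); [nra|].
    replace (- D p / c p * (c p * - c q)) with (- D p * - c q) by (field; lra).
    replace (D q / - c q * (c p * - c q)) with (D q * c p) by (field; lra). nra.
  - exists t. intros z Hz Hcz. destruct (Rlt_or_le 0 (c z)) as [Hpos|Hneg].
    + specialize (H1 _ (in_map (fun p => - D p / c p) _ _ (proj2 (HP z) (conj Hz Hpos)))).
      cbv beta in H1. apply (Rmult_lt_compat_r (c z)) in H1; [|lra].
      replace (- D z / c z * c z) with (- D z) in H1 by (field; lra). lra.
    + assert (Hneg' : c z < 0) by lra.
      specialize (H2 _ (in_map (fun q => D q / - c q) _ _ (proj2 (HN z) (conj Hz Hneg')))).
      cbv beta in H2. apply (Rmult_lt_compat_r (- c z)) in H2; [|lra].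
      replace (D z / - c z * - c z) with (D z) in H2 by (field; lra). lra.
Qed.

(* Fourier-Motzkin elimination of coordinate d: keep the generators with z_d = 0
   and add, for every p with p_d > 0 and q with q_d < 0, the combination
   (-q_d) p + p_d q, whose d-th coordinate vanishes. *)
Definition fm_combine (d : nat) (p q : nat -> R) : nat -> R :=
  vadd (vscal (- q d) p) (vscal (p d) q).

Definition fm_eliminate (d : nat) (zs : list (nat -> R)) : list (nat -> R) :=
  filter (fun z => if Req_EM_T (z d) 0 then true else false) zs ++
  flat_map (fun p => map (fm_combine d p) (filter (fun q => posb (- q d)) zs))
           (filter (fun p => posb (p d)) zs).

Lemma fm_eliminate_sound d zs u : In u (fm_eliminate d zs) -> pos_comb zs u /\ u d = 0.
Proof.
  unfold fm_eliminate. intros Hu. apply in_app_or in Hu. destruct Hu as [Hu|Hu].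
  - apply filter_In in Hu. destruct Hu as [Hu Hd].
    destruct (Req_EM_T (u d) 0); [|discriminate]. split; [apply pos_comb_in|]; auto.
  - apply in_flat_map in Hu. destruct Hu as [p [Hp Hu]]. apply in_map_iff in Hu.
    destruct Hu as [q [<- Hq]]. apply filter_In in Hp, Hq.
    rewrite posb_spec in Hp, Hq. split.
    + unfold fm_combine. apply pos_comb_add; apply pos_comb_scal;
        (apply pos_comb_in; tauto) || lra.
    + unfold fm_combine, vadd, vscal. ring.
Qed.

Lemma fm_eliminate_keep d zs z : In z zs -> z d = 0 -> In z (fm_eliminate d zs).
Proof.
  intros Hz Hd. unfold fm_eliminate. apply in_or_app; left. apply filter_In.
  split; auto. destruct (Req_EM_T (z d) 0); congruence.
Qed.

Lemma fm_eliminate_combine d zs p q : In p zs -> In q zs -> 0 < p d -> q d < 0 ->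
  In (fm_combine d p q) (fm_eliminate d zs).
Proof.
  intros Hp Hq Hpd Hqd. unfold fm_eliminate. apply in_or_app; right. apply in_flat_map.
  exists p. split; [apply filter_In; rewrite posb_spec; auto|].
  apply in_map, filter_In. rewrite posb_spec. split; [auto|lra].
Qed.

Lemma dot_extend d lam t z :
  dot (S d) (fun l => if Nat.eq_dec l d then t else lam l) z = dot d lam z + t * z d.
Proof.
  unfold dot. simpl. destruct (Nat.eq_dec d d); [|congruence].
  f_equal. apply sumR_ext. intros i Hi. destruct (Nat.eq_dec i d); [lia|auto].
Qed.

Theorem gordan d : forall zs,
  (forall w, pos_comb zs w -> ~ (forall l, (l < d)%nat -> w l = 0)) ->
  exists lam, forall z, In z zs -> 0 < dot d lam z.
Proof.
  induction d as [|d IH]; intros zs Hzs.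
  - exists (fun _ => 0). intros z Hz. exfalso. apply (Hzs z (pos_comb_in _ _ Hz)). intros; lia.
  - destruct (IH (fm_eliminate d zs)) as [lam Hlam].
    { intros w Hw Hw0. apply (Hzs w).
      - eapply pos_comb_mono; [|exact Hw]. intros u Hu; apply (fm_eliminate_sound d); auto.
      - assert (w d = 0).
        { eapply pos_comb_coord; [|exact Hw]. intros u Hu; apply (fm_eliminate_sound d zs); auto. }
        intros l Hl. destruct (Nat.eq_dec l d); [subst; auto|apply Hw0; lia]. }
    destruct (elimination_threshold zs (dot d lam) (fun z => z d)) as [t Ht].
    { intros p q Hp Hq Hpd Hqd.
      specialize (Hlam _ (fm_eliminate_combine d zs p q Hp Hq Hpd Hqd)).
      unfold dot, fm_combine, vadd, vscal in Hlam.
      rewrite (sumR_ext _ _ (fun l => (- q d) * (lam l * p l) + p d * (lam l * q l))) in Hlam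
        by (intros; ring).
      rewrite sumR_plus, !sumR_scal in Hlam. exact Hlam. }
    exists (fun l => if Nat.eq_dec l d then t else lam l).
    intros z Hz. rewrite dot_extend.
    destruct (Req_dec (z d) 0) as [H0|H0].
    + rewrite H0, Rmult_0_r, Rplus_0_r. apply Hlam, fm_eliminate_keep; auto.
    + apply Ht; auto.
Qed.

Definition convexR (f : R -> R) : Prop :=
  forall x y t, 0 <= t <= 1 -> f (t * x + (1 - t) * y) <= t * f x + (1 - t) * f y.

Definition slope_le (f : R -> R) (B : R) : Prop :=
  forall x y, x <= y -> f y - f x <= B * (y - x).

Definition add_support (f : R -> R) (rho a : R) : R -> R :=
  fun y => Rmax (f y) (f rho + a * (y - rho)).

Lemma add_support_convex f rho a : convexR f -> convexR (add_support f rho a).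
Proof.
  intros Hcv x y t Ht. unfold add_support. apply Rmax_lub.
  - eapply Rle_trans; [apply Hcv; auto|].
    assert (f x <= Rmax (f x) (f rho + a * (x - rho))) by apply Rmax_l.
    assert (f y <= Rmax (f y) (f rho + a * (y - rho))) by apply Rmax_l. nra.
  - assert (f rho + a * (x - rho) <= Rmax (f x) (f rho + a * (x - rho))) by apply Rmax_r.
    assert (f rho + a * (y - rho) <= Rmax (f y) (f rho + a * (y - rho))) by apply Rmax_r. nra.
Qed.

Lemma add_support_left f rho a x : slope_le f a -> x <= rho -> add_support f rho a x = f x.
Proof. intros Hsl Hx. unfold add_support. apply Rmax_left. specialize (Hsl x rho Hx). lra. Qed.

Lemma add_support_tangent f rho a y : slope_le f a ->
  add_support f rho a rho + a * (y - rho) <= add_support f rho a y.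
Proof. intros Hsl. rewrite add_support_left by (auto || lra). apply Rmax_r. Qed.

Lemma add_support_slope f rho a B : slope_le f a -> a <= B -> slope_le (add_support f rho a) B.
Proof.
  intros Hsl HaB x y Hxy. unfold add_support.
  assert (f x <= Rmax (f x) (f rho + a * (x - rho))) by apply Rmax_l.
  assert (f rho + a * (x - rho) <= Rmax (f x) (f rho + a * (x - rho))) by apply Rmax_r.
  specialize (Hsl _ _ Hxy).
  assert (a * (y - x) <= B * (y - x)) by (apply Rmult_le_compat_r; lra).
  assert (Rmax (f y) (f rho + a * (y - rho)) <= Rmax (f x) (f rho + a * (x - rho)) + B * (y - x))
    by (apply Rmax_lub; lra).
  lra.
Qed.

Lemma lex_argmax n (r a : nat -> R) : exists m, (m <= n)%nat /\
  forall i, (i <= n)%nat -> r i < r m \/ (r i = r m /\ a i <= a m).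
Proof.
  induction n.
  - exists 0%nat; split; auto. intros i Hi; assert (i = 0%nat) by lia; subst; right; lra.
  - destruct IHn as [m [Hm H]].
    assert (Hold : forall j, r m < r j \/ (r m = r j /\ a m <= a j) ->
              forall i, (i <= n)%nat -> r i < r j \/ (r i = r j /\ a i <= a j)).
    { intros j Hj i Hi. destruct (H i Hi) as [H1|[H1 H2]]; lra. }
    destruct (total_order_T (r (S n)) (r m)) as [[H1|H1]|H1];
      [|destruct (Rle_dec (a (S n)) (a m))|].
    + exists m; split; [lia|]. intros i Hi. destruct (Nat.eq_dec i (S n)); [subst; left; auto|apply H; lia].
    + exists m; split; [lia|]. intros i Hi. destruct (Nat.eq_dec i (S n)); [subst; right; auto|apply H; lia].
    + exists (S n); split; [lia|]. intros i Hi. destruct (Nat.eq_dec i (S n)); [subst; right; lra|].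
      apply Hold; [lra|lia].
    + exists (S n); split; [lia|]. intros i Hi. destruct (Nat.eq_dec i (S n)); [subst; right; lra|].
      apply Hold; [lra|lia].
Qed.

(* Induction: remove the
   lexicographically largest point, interpolate the rest, add its supporting line. *)
Lemma convex_interpolation n : forall (r a : nat -> R) B,
  (forall i j, (i < n)%nat -> (j < n)%nat -> r i < r j -> a i <= a j) ->
  (forall i, (i < n)%nat -> a i <= B) ->
  exists f, convexR f /\ slope_le f B /\
    forall i, (i < n)%nat -> forall y, f (r i) + a i * (y - r i) <= f y.
Proof.
  induction n; intros r a B Hmono HB.
  - exists (fun y => B * y). split; [|split].
    + intros x y t _. lra.
    + intros x y _. lra.
    + intros; lia.
  - destruct (lex_argmax n r a) as [m [Hm Hmax]].
    assert (Hle : forall i, (i <= n)%nat -> a i <= a m).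
    { intros i Hi. destruct (Hmax i Hi) as [H|[_ H]]; auto. apply Hmono; auto; lia. }
    (* the other points, indexed below n by moving index n into the slot of m *)
    set (sw := fun i => if Nat.eq_dec i m then n else i).
    assert (Hsw : forall i, (i < n)%nat -> (sw i <= n)%nat /\ sw i <> m).
    { intros i Hi; unfold sw; destruct (Nat.eq_dec i m); lia. }
    assert (Hsw_onto : forall i, (i <= n)%nat -> i <> m -> exists j, (j < n)%nat /\ sw j = i).
    { intros i Hi Him. destruct (Nat.eq_dec i n) as [->|Hin].
      - exists m. split; [lia|]. unfold sw. destruct (Nat.eq_dec m m); congruence.
      - exists i. split; [lia|]. unfold sw. destruct (Nat.eq_dec i m); congruence. }
    destruct (IHn (fun i => r (sw i)) (fun i => a (sw i)) (a m)) as [f [Hcv [Hsl Hsub]]].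
    { intros i j Hi Hj H. apply Hmono; auto; apply Hsw in Hi; apply Hsw in Hj; lia. }
    { intros i Hi. apply Hle, Hsw; auto. }
    exists (add_support f (r m) (a m)). split; [|split].
    + apply add_support_convex; auto.
    + apply add_support_slope; auto. apply HB; lia.
    + intros i Hi y. destruct (Nat.eq_dec i m) as [->|Him].
      * apply add_support_tangent; auto.
      * destruct (Hsw_onto i ltac:(lia) Him) as [j [Hj <-]].
        assert (Hri : r (sw j) <= r m) by (destruct (Hmax (sw j) ltac:(lia)) as [H|[H _]]; lra).
        rewrite add_support_left by auto.
        eapply Rle_trans; [apply (Hsub j Hj y)|]. apply Rmax_l.
Qed.

(* If the slopes g_i strictly increase along r, adding a small quadratic makes the
   interpolant strictly convex. *)
Lemma strictly_convex_interpolation n (r g : nat -> R) :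
  increasing_along n r g ->
  exists h, strictly_convex_pos h /\
    forall i, (i < n)%nat -> forall y, h (r i) + g i * (y - r i) <= h y.
Proof.
  intros Hinc.
  (* a curvature dl small enough that the slopes g_i - 2 dl r_i still increase along r *)
  destruct (small_common n (fun i t => forall j, (j < n)%nat -> r i < r j ->
                               2 * t * (r j - r i) <= g j - g i)) as [dl [Hdl Hdel]].
  { intros i Hi.
    destruct (small_common n (fun j t => r i < r j -> 2 * t * (r j - r i) <= g j - g i))
      as [d0 [Hd0 Hd0']].
    2:{ exists d0; split; [auto|]. intros t Ht Htd j Hj. apply Hd0'; auto. }
    intros j Hj. destruct (Rlt_dec (r i) (r j)) as [Hr|Hr].
    - exists ((g j - g i) / (2 * (r j - r i))). split.
      + apply Rdiv_lt_0_compat; [specialize (Hinc i j Hi Hj Hr); lra|lra].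
      + intros t Ht Htd _. apply (Rmult_le_compat_r (2 * (r j - r i))) in Htd; [|lra].
        replace ((g j - g i) / (2 * (r j - r i)) * (2 * (r j - r i))) with (g j - g i) in Htd
          by (field; lra). lra.
    - exists 1. split; [lra|]. intros; contradiction. }
  set (a := fun i => g i - 2 * dl * r i).
  destruct (finite_upper_bound n a) as [B HB].
  destruct (convex_interpolation n r a B) as [phi [Hcv [_ Hsub]]]; auto.
  { intros i j Hi Hj Hr. specialize (Hdel i Hi dl Hdl (Rle_refl _) j Hj Hr). unfold a. lra. }
  exists (fun x => phi x + dl * x * x). split.
  - intros x z t Hx Hz Hxz Ht. assert (H1 := Hcv x z t ltac:(lra)).
    assert (Hp : 0 < dl * (t * (1 - t)) * ((x - z) * (x - z))).
    { apply Rmult_lt_0_compat; [apply Rmult_lt_0_compat; [lra|nra]|].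
      assert (x - z <> 0) by lra. nra. }
    assert (Hid : t * (dl * x * x) + (1 - t) * (dl * z * z)
                  - dl * (t * x + (1 - t) * z) * (t * x + (1 - t) * z)
                  = dl * (t * (1 - t)) * ((x - z) * (x - z))) by ring.
    lra.
  - intros i Hi y. specialize (Hsub i Hi y). unfold a in Hsub.
    assert (0 <= dl * ((y - r i) * (y - r i))) by (apply Rmult_le_pos; [lra|apply Rle_0_sqr]).
    nra.
Qed.

Lemma subgradient_lower_bound n h ps p0 p g :
  (forall i, (i < n)%nat -> 0 < ps i) ->
  (forall i, (i < n)%nat -> forall y, h (p0 i / ps i) + g i * (y - p0 i / ps i) <= h y) ->
  Hdiv n h p0 ps + sumR n (fun i => g i * (p i - p0 i)) <= Hdiv n h p ps.
Proof.
  intros Hps Hsub. unfold Hdiv. rewrite <- sumR_plus. apply sumR_le. intros i Hi.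
  specialize (Hps i Hi). specialize (Hsub i Hi (p i / ps i)).
  replace (g i * (p i - p0 i)) with (ps i * (g i * (p i / ps i - p0 i / ps i))) by (field; lra).
  rewrite <- Rmult_plus_distr_l. apply Rmult_le_compat_l; lra.
Qed.

Lemma row_combination_orthogonal n k m M lam p q : in_L n k m M p -> in_L n k m M q ->
  sumR n (fun i => sumR (S k) (fun r => lam r * m r i) * (p i - q i)) = 0.
Proof.
  intros Hp Hq.
  rewrite (sumR_ext n _ (fun i => sumR (S k) (fun r => lam r * (m r i * p i - m r i * q i))))
    by (intros; rewrite Rmult_comm, <- sumR_scal; apply sumR_ext; intros; ring).
  rewrite sumR_swap. apply sumR_zero. intros r Hr.
  rewrite sumR_scal, sumR_minus, Hp, Hq by lia. ring.
Qed.

Definition allpairs (n : nat) : list (nat * nat) :=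
  flat_map (fun i => map (fun j => (j, i)) (seq 0 i)) (seq 0 n).

Lemma in_allpairs n j i : In (j, i) (allpairs n) <-> (j < i /\ i < n)%nat.
Proof.
  unfold allpairs. rewrite in_flat_map. split.
  - intros [x [Hx H]]. apply in_map_iff in H. destruct H as [y [Hy Hy']]. inversion Hy; subst.
    apply in_seq in Hx; apply in_seq in Hy'. lia.
  - intros [H1 H2]. exists i. split; [apply in_seq; lia|].
    apply in_map_iff. exists j; split; auto. apply in_seq; lia.
Qed.

(* The pairs j < i < n with distinct ratios, indexing the nonzero generators of Q. *)
Definition ratio_pairs (n : nat) (r : nat -> R) : list (nat * nat) :=
  filter (fun pr => if Req_EM_T (r (fst pr)) (r (snd pr)) then false else true) (allpairs n).

Lemma in_ratio_pairs n r j i : In (j, i) (ratio_pairs n r) <-> ((j < i /\ i < n)%nat /\ r j <> r i).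
Proof.
  unfold ratio_pairs. rewrite filter_In, in_allpairs. simpl.
  destruct (Req_EM_T (r j) (r i)); intuition congruence.
Qed.

(* Image under the constraint matrix m of the generator of Q attached to a pair. *)
Definition generator_image (m : nat -> nat -> R) (r : nat -> R) (pr : nat * nat) : nat -> R :=
  fun row => sgn (r (fst pr) - r (snd pr)) * (m row (snd pr) - m row (fst pr)).

Lemma pos_comb_realised n ps m p0 w :
  pos_comb (map (generator_image m (ratio p0 ps)) (ratio_pairs n (ratio p0 ps))) w ->
  exists v, in_Q n p0 ps v /\ (forall row, w row = sumR n (fun l => m row l * v l)) /\
    sumR n (fun l => ratio p0 ps l * v l) < 0.
Proof.
  set (r := ratio p0 ps).
  intros Hw. induction Hw as [z Hz|u w _ [v1 [Q1 [W1 P1]]] _ [v2 [Q2 [W2 P2]]]|t u Ht _ [v [Q [W P]]]].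
  - apply in_map_iff in Hz. destruct Hz as [[j i] [<- Hz]].
    apply in_ratio_pairs in Hz. destruct Hz as [[Hji Hin] Hr].
    exists (fun l => sgn (r j - r i) * gamma j i l). split; [|split].
    + apply Q_generator; auto.
    + intros row. unfold generator_image; simpl.
      rewrite (sumR_ext n _ (fun l => sgn (r j - r i) * (m row l * gamma j i l))) by (intros; ring).
      rewrite sumR_scal, sumR_gamma by lia. reflexivity.
    + rewrite (sumR_ext n _ (fun l => sgn (r j - r i) * (r l * gamma j i l))) by (intros; ring).
      rewrite sumR_scal, sumR_gamma by lia.
      destruct (total_order_T (r j) (r i)) as [[H|H]|H]; [|congruence|].
      * rewrite sgn_neg by lra. lra.
      * rewrite sgn_pos by lra. lra.
  - exists (fun l => v1 l + v2 l). split; [apply Q_add; auto|split].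
    + intros row. unfold vadd. rewrite W1, W2, <- sumR_plus. apply sumR_ext; intros; ring.
    + rewrite (sumR_ext n _ (fun l => r l * v1 l + r l * v2 l)) by (intros; ring).
      rewrite sumR_plus. lra.
  - exists (fun l => t * v l). split; [apply Q_scal; auto; lra|split].
    + intros row. unfold vscal. rewrite W, <- sumR_scal. apply sumR_ext; intros; ring.
    + rewrite (sumR_ext n _ (fun l => t * (r l * v l))) by (intros; ring).
      rewrite sumR_scal. nra.
Qed.

Lemma separating_combination n ps k m M p0 : in_L n k m M p0 -> Q_cond n k m M ps p0 ->
  exists lam, increasing_along n (ratio p0 ps) (fun l => sumR (S k) (fun row => lam row * m row l)).
Proof.
  intros HL HQ. set (r := ratio p0 ps).
  destruct (gordan (S k) (map (generator_image m r) (ratio_pairs n r))) as [lam Hlam].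
  { intros w Hw Hw0. destruct (pos_comb_realised n ps m p0 w Hw) as [v [Hv [Hwv Hrv]]].
    assert (Hfix : forall l, (l < n)%nat -> p0 l + v l = p0 l).
    { apply (HQ (fun l => p0 l + v l)); [exists v; split; auto|].
      intros row Hrow.
      rewrite (sumR_ext n _ (fun l => m row l * p0 l + m row l * v l)) by (intros; ring).
      rewrite sumR_plus, HL, <- Hwv, Hw0 by lia. ring. }
    rewrite sumR_zero in Hrv; [lra|]. intros l Hl. specialize (Hfix l Hl).
    replace (v l) with 0 by lra. ring. }
  set (y := fun l => sumR (S k) (fun row => lam row * m row l)).
  assert (Hpair : forall j i, (j < i)%nat -> (i < n)%nat -> r j <> r i ->
                    0 < sgn (r j - r i) * (y i - y j)).
  { intros j i Hji Hin Hr. unfold y. rewrite <- sumR_minus, <- sumR_scal.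
    assert (Hz : In (generator_image m r (j, i)) (map (generator_image m r) (ratio_pairs n r)))
      by (apply in_map, in_ratio_pairs; auto).
    specialize (Hlam _ Hz). unfold dot, generator_image in Hlam; simpl in Hlam.
    erewrite sumR_ext; [exact Hlam|]. intros; simpl; ring. }
  exists (fun row => - lam row). intros i j Hi Hj Hr.
  rewrite !(sumR_ext (S k) (fun row => - lam row * m row _) (fun row => - (lam row * m row _)))
    by (intros; ring).
  rewrite !sumR_opp. fold (y i) (y j).
  destruct (Nat.lt_total i j) as [H|[H|H]].
  - specialize (Hpair i j H Hj ltac:(lra)). rewrite sgn_neg in Hpair by lra. lra.
  - subst; lra.
  - specialize (Hpair j i H Hi ltac:(lra)). rewrite sgn_pos in Hpair by lra. lra.
Qed.

Lemma forward n ps k m M p0 : in_simplex n ps -> in_L n k m M p0 -> Q_cond n k m M ps p0 ->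
  exists h, strictly_convex_pos h /\ is_minimizer n k m M h ps p0.
Proof.
  intros [Hps _] HL HQ.
  destruct (separating_combination n ps k m M p0 HL HQ) as [lam Hinc].
  destruct (strictly_convex_interpolation n (ratio p0 ps) _ Hinc) as [h [Hsc Hsub]].
  exists h. split; [exact Hsc|]. intros p HpL _.
  assert (Hbound := subgradient_lower_bound n h ps p0 p _ Hps Hsub).
  assert (Horth := row_combination_orthogonal n k m M lam p p0 HpL HL).
  cbv beta in Hbound. lra.
Qed.

Theorem mainTheorem4
  (n : nat) (hn : (2 <= n)%nat)
  (ps : nat -> R) (hps : in_simplex n ps)
  (k : nat) (m : nat -> nat -> R) (M : nat -> R)
  (hm0 : forall j, (j < n)%nat -> m 0%nat j = 1) (hM0 : M 0%nat = 1)
  (hLne : exists p, in_L n k m M p /\ in_simplex n p)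
  (p0 : nat -> R) (hp0L : in_L n k m M p0) (hp0S : in_simplex n p0) :
  (Q_cond n k m M ps p0 ->
     exists h : R -> R, strictly_convex_pos h /\ is_minimizer n k m M h ps p0)
  /\
  ((exists h : R -> R, strictly_convex_pos h /\ differentiable_pos h /\
       is_minimizer n k m M h ps p0) ->
     Q_cond n k m M ps p0).
Proof.
  split.
  - apply forward; auto.
  - apply backward; auto.
Qed.
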